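(* Let $A=(\Sigma,q,N,\delta)$ be a partitioned LQCA with local transition matrix $Q$. Then the following are equivalent: (1) $Q$ is unitary; (2) $A$ is well-formed; (3) the time evolution operator $U_A$ is unitary.
   Context: A linear quantum cellular automaton (LQCA) is a tuple $A=(\Sigma,q,N,\delta)$ where $\Sigma$ is a finite nonempty set of states, $N=(a_1,\dots,a_r)$ is a strictly increasing sequence of integers, $\delta:\Sigma^r\to\mathbb C^\Sigma$ satisfies $\|\delta(w)\|>0$ for all $w$, and $q\in\Sigma$ satisfies $[\delta(q,\dots,q)](x)=1$ if $x=q$ and $0$ otherwise. A configuration is a map $c:\mathbb Z\to\Sigma$ with $c_i\ne q$ for only finitely many $i$; $\mathcal C_A$ is the set of configurations. With $c_{i+N}=(c_{i+a_1},\dots,c_{i+a_r})$, the time evolution operator is $U_A(d,c)=\prod_{i\in\mathbb Z}[\delta(c_{i+N})](d_i)$, viewed as the linear operator on $\ell_2(\mathcal C_A)$ sending $u$ to $d\mapsto\sum_cU_A(d,c)u(c)$. $A$ is well-formed if $U_A$ preserves the $\ell_2$ norm; $U_A$ is unitary if it is norm preserving and bijective. An LQCA is partitioned (PLQCA) if $\Sigma=\Sigma_1\times\cdots\times\Sigma_r$ for finite nonempty sets $\Sigma_j$, and $\delta=\delta_Q\circ\delta_p$ where $\delta_p:\Sigma^r\to\Sigma$ is $\delta_p((x_{1,1},\dots,x_{1,r}),\dots,(x_{r,1},\dots,x_{r,r}))=(x_{1,1},x_{2,2},\dots,x_{r,r})$ and $\delta_Q:\Sigma\to\mathbb C^\Sigma$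 is arbitrary (subject to $\delta$ making $A$ an LQCA). The local transition matrix is the $\Sigma\times\Sigma$ complex matrix $Q(y,x)=[\delta_Q(x)](y)$. *)

From mathcomp Require Import all_boot all_order all_algebra.
From mathcomp Require Import reals.
From mathcomp.real_closed Require Import complex.
From Stdlib Require List.

Set Implicit Arguments.
Unset Strict Implicit.
Unset Printing Implicit Defensive.

Import Order.TTheory GRing.Theory Num.Theory.
Local Open Scope ring_scope.

(* Finite sets are
   duplicate-free lists. *)
Definition HasSum (R : realType) (T : Type) (f : T -> R[i]) (s : R[i]) : Prop :=
  forall eps : R, 0 < eps ->
    exists F0 : seq T, forall F : seq T,
      List.NoDup F -> List.incl F0 F ->
      `|\sum_(x <- F) f x - s| < (eps%:C)%C.

Definition window (M : nat) : seq int :=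
  [seq (k%:Z - M%:Z)%R | k <- iota 0 (M.*2.+1)].

(* [IsProdZ g z]: the product over all i in Z of g i equals z, for a family
   g that is eventually 1 (the symmetric partial products are eventually
   constant equal to z). *)
Definition IsProdZ (R : realType) (g : int -> R[i]) (z : R[i]) : Prop :=
  exists M : nat, forall M' : nat, (M <= M')%N ->
    \prod_(i <- window M') g i = z.

Section PLQCA.

Variable R : realType.
Variable r : nat.
Variable Sig : 'I_r -> finType.

Definition State : finType := {dffun forall j : 'I_r, Sig j}.

(* the neighbourhood N = (a_1, ..., a_r) *)
Variable a : 'I_r -> int.
Variable q : State.
(* local transition matrix Q(y, x) = [delta_Q(x)](y) *)
Variable Q : State -> State -> R[i].

Definition delta_p (w : 'I_r -> State) : State := [ffun j => w j j].

Definition delta (w : 'I_r -> State) (y : State) : R[i] := Q y (delta_p w).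

Definition strictly_increasing : Prop :=
  forall i j : 'I_r, (i < j)%N -> a i < a j.

Definition is_PLQCA : Prop :=
  strictly_increasing /\
  (forall w : 'I_r -> State, 0 < \sum_(y : State) `|delta w y| ^+ 2) /\
  (forall y : State, delta (fun _ => q) y = (y == q)%:R).

Definition Config : Type :=
  {c : int -> State | exists n : nat, forall i : int, (n < `|i|)%N -> c i = q}.

Definition cfg (c : Config) : int -> State := proj1_sig c.

Definition nbh (c : Config) (i : int) : 'I_r -> State := fun j => cfg c (i + a j).

Definition Ucoef (d c : Config) (z : R[i]) : Prop :=
  IsProdZ (fun i => delta (nbh c i) (cfg d i)) z.

Definition l2norm2 (u : Config -> R[i]) (s : R[i]) : Prop :=
  HasSum (fun c => `|u c| ^+ 2) s.

Definition in_l2 (u : Config -> R[i]) : Prop := exists s, l2norm2 u s.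

Definition Uapp (u v : Config -> R[i]) : Prop :=
  forall d : Config, exists w : Config -> R[i],
    (forall c, Ucoef d c (w c)) /\ HasSum (fun c => w c * u c) (v d).

Definition well_formed : Prop :=
  forall (u : Config -> R[i]) (s : R[i]), l2norm2 u s ->
    exists v, Uapp u v /\ l2norm2 v s.

Definition U_unitary : Prop :=
  well_formed /\
  (forall u1 u2 v, in_l2 u1 -> in_l2 u2 -> Uapp u1 v -> Uapp u2 v -> u1 = u2) /\
  (forall v, in_l2 v -> exists u, in_l2 u /\ Uapp u v).

Definition Qmx : 'M[R[i]]_#|State| :=
  \matrix_(i, j) Q (enum_val i) (enum_val j).

End PLQCA.

(* Write pi for the partition map c |-> (i |-> (c_{i+a_j})_j); it is a bijection
   of configurations and U_A(d, c) = prod_i Q(d_i, (pi c)_i).  If Q is unitary,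
   the quiescent state q is fixed by both Q and Q^*, so U_A(d, c) <> 0 forces d
   and pi c to be quiescent at the same cells.  Hence, on the configurations
   quiescent outside the window -N..N, U_A is block diagonal, each block being
   the tensor power of Q over 2N+1 cells, which is again unitary.  Isometry,
   injectivity and surjectivity of U_A follow by exhausting C_A with these
   windows.  Conversely, on vectors supported on the preimages under pi of the
   configurations quiescent outside cell 0, U_A acts as Q, so a well-formed A
   has a norm-preserving, hence unitary, Q. *)

From HB Require Import structures.
From mathcomp Require Import all_boot all_order all_algebra zify ring.
From mathcomp Require Import reals.
From mathcomp.real_closed Require Import complex.
From Stdlib Require Import Classical ProofIrrelevance FunctionalExtensionality ClassicalEpsilon.

Set Implicit Arguments.
Unset Strict Implicit.
Unset Printing Implicit Defensive.

Import Order.TTheory GRing.Theory Num.Theory.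
Local Open Scope ring_scope.

Section StdlibLists.
Variable T : eqType.

Lemma InP (x : T) s : reflect (List.In x s) (x \in s).
Proof.
elim: s => [|y s IH] /=; first by constructor.
rewrite inE; apply: (iffP orP) => [[/eqP->|/IH]|[->|/IH]]; auto.
Qed.

Lemma NoDupP (s : seq T) : reflect (List.NoDup s) (uniq s).
Proof.
apply: (iffP idP).
  elim: s => [|x s IH] /= ; first by constructor.
  by case/andP=> xs us; constructor; [apply/InP | exact: IH].
by elim=> //= x s1 xs1 _ ->; rewrite andbT; apply/InP.
Qed.

Lemma inclP (s1 s2 : seq T) : List.incl s1 s2 <-> {subset s1 <= s2}.
Proof. by split=> h x /InP /h /InP. Qed.

End StdlibLists.

Section Summable.
Variable R : realType.
Local Notation C := R[i].
Variable T : eqType.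

Lemma big_sub_split (f : T -> C) (L F : seq T) :
  uniq L -> uniq F -> {subset L <= F} ->
  \sum_(x <- F) f x = \sum_(x <- L) f x + \sum_(x <- F | x \notin L) f x.
Proof.
move=> uL uF sLF; rewrite (bigID (mem L)) /=; congr (_ + _).
rewrite -big_filter; apply/perm_big/uniq_perm; rewrite ?filter_uniq //.
by move=> x; rewrite mem_filter andb_idr //; apply: sLF.
Qed.

Lemma HasSum_finite (f : T -> C) (L : seq T) : uniq L ->
  (forall x, x \notin L -> f x = 0) -> HasSum f (\sum_(x <- L) f x).
Proof.
move=> uL f0 eps eps_gt0; exists L => F /NoDupP uF /inclP sLF.
rewrite (big_sub_split f uL uF sLF) [\sum_(x <- F | _) _]big1 ?addr0 ?subrr ?normr0.
  by rewrite ltcE /= eqxx.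
by move=> x /f0.
Qed.

Lemma HasSum_unique (f : T -> C) s1 s2 : HasSum f s1 -> HasSum f s2 -> s1 = s2.
Proof.
move=> h1 h2; apply/eqP; rewrite -subr_eq0; apply/negP => ne12.
pose n : R := complex.Re `|s1 - s2|.
have En : `|s1 - s2| = (n%:C)%C by rewrite /n RRe_real ?normr_real.
have n2_gt0 : 0 < n / 2.
  by rewrite divr_gt0 // -ltcR -En normr_gt0; apply/negP.
have [F1 H1] := h1 _ n2_gt0; have [F2 H2] := h2 _ n2_gt0.
pose F := undup (F1 ++ F2).
have uF : List.NoDup F by apply/NoDupP; exact: undup_uniq.
have /H1 {}H1 : List.incl F1 F by apply/inclP => x x1; rewrite mem_undup mem_cat x1.
have /H2 {}H2 : List.incl F2 F.
  by apply/inclP => x x2; rewrite mem_undup mem_cat x2 orbT.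
have : `|s1 - s2| < ((n / 2)%:C + (n / 2)%:C)%C.
  rewrite (_ : s1 - s2 = (\sum_(x <- F) f x - s2) - (\sum_(x <- F) f x - s1)); last by ring.
  exact: le_lt_trans (ler_normB _ _) (ltrD (H2 uF) (H1 uF)).
by rewrite -rmorphD /= -splitr En ltxx.
Qed.

Lemma eq_HasSum (f g : T -> C) s : f =1 g -> HasSum f s -> HasSum g s.
Proof.
move=> fg h eps eps_gt0; have [F0 H] := h eps eps_gt0; exists F0 => F uF iF.
by rewrite -(eq_bigr _ (fun x _ => fg x)); exact: H.
Qed.

Lemma HasSum_ge0_real (f : T -> C) s : (forall x, 0 <= f x) -> HasSum f s ->
  s \is Num.real.
Proof.
move=> f_ge0 h; rewrite CrealE; apply/eqP/(HasSum_unique (f := fun x => (f x)^*)).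
  move=> eps eps_gt0; have [F0 H] := h eps eps_gt0; exists F0 => F uF iF.
  by rewrite -rmorph_sum -rmorphB norm_conjC; exact: H.
by apply: eq_HasSum h => x; rewrite geC0_conj.
Qed.

Lemma exhaustion_covers (A : nat -> seq T) (F : seq T) :
  (forall N M, (N <= M)%N -> {subset A N <= A M}) ->
  (forall x, exists N, x \in A N) -> exists N, {subset F <= A N}.
Proof.
move=> A_mono A_cover; elim: F => [|x F [N HN]]; first by exists 0%N.
have [M HM] := A_cover x; exists (maxn N M) => y; rewrite inE => /orP[/eqP->|/HN].
  by apply: (A_mono M); rewrite ?leq_maxr.
by apply: A_mono; rewrite leq_maxl.
Qed.

End Summable.

(* For nonnegative terms, the partial sums along an increasing exhaustion by
   finite sets squeeze every larger finite partial sum. *)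
Lemma HasSum_exhaustions (R : realType) (T T' : eqType) (f : T -> R[i])
    (g : T' -> R[i]) (s : R[i]) (A : nat -> seq T) (B : nat -> seq T') :
  (forall x, 0 <= f x) -> (forall y, 0 <= g y) ->
  (forall N, uniq (A N)) -> (forall N, uniq (B N)) ->
  (forall N M, (N <= M)%N -> {subset A N <= A M}) ->
  (forall N M, (N <= M)%N -> {subset B N <= B M}) ->
  (forall x, exists N, x \in A N) -> (forall y, exists N, y \in B N) ->
  (forall N, \sum_(x <- A N) f x = \sum_(y <- B N) g y) ->
  HasSum g s -> HasSum f s.
Proof.
move=> f_ge0 g_ge0 uA uB A_mono B_mono A_cover B_cover AB hg eps eps_gt0.
have s_real := HasSum_ge0_real g_ge0 hg.
have [F0 H0] := hg eps eps_gt0.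
have [N HN] := exhaustion_covers F0 B_mono B_cover.
exists (A N) => F /NoDupP uF /inclP sAF.
have [N1 HN1] := exhaustion_covers F A_mono A_cover.
pose M := maxn N N1.
have sFA : {subset F <= A M} by move=> x /HN1; apply: A_mono; rewrite leq_maxr.
have closeM : `|\sum_(x <- A M) f x - s| < (eps%:C)%C.
  rewrite AB; apply: H0; first exact/NoDupP.
  by apply/inclP => y /HN; apply: B_mono; rewrite leq_maxl.
have closeN : `|\sum_(x <- A N) f x - s| < (eps%:C)%C.
  by rewrite AB; apply: H0; [exact/NoDupP | exact/inclP].
have mono (L L' : seq T) : uniq L -> uniq L' -> {subset L <= L'} ->
    \sum_(x <- L) f x <= \sum_(x <- L') f x.
  by move=> uL uL' sLL'; rewrite (big_sub_split f uL uL' sLL') lerDl sumr_ge0.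
move: closeN closeM; rewrite !real_ltr_distl ?rpredB //.
  case/andP=> lo _ /andP[_ hi]; apply/andP; split.
    exact: lt_le_trans lo (mono _ _ (uA N) uF sAF).
  exact: le_lt_trans (mono _ _ uF (uA M) sFA) hi.
all: by rewrite ger0_real // sumr_ge0.
Qed.

Section FiniteSums.
Variable C : numClosedFieldType.

Lemma sum_mul_delta (T : eqType) (B : seq T) (F : T -> C) b : uniq B -> b \in B ->
  \sum_(b' <- B) F b' * (b == b')%:R = F b.
Proof.
move=> uB bB; rewrite (bigD1_seq b) //= eqxx mulr1 big1 ?addr0 // => b' nb.
by rewrite eq_sym (negbTE nb) mulr0.
Qed.

Lemma orthonormal_sum_norm2 (T T' : eqType) (K : T -> T' -> C) (A : seq T)
    (B : seq T') (w : T' -> C) : uniq A -> uniq B ->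
  (forall b b', b \in B -> b' \in B ->
     \sum_(x <- A) K x b * (K x b')^* = (b == b')%:R) ->
  \sum_(x <- A) `|\sum_(b <- B) K x b * w b| ^+ 2 = \sum_(b <- B) `|w b| ^+ 2.
Proof.
move=> uA uB orth.
under eq_bigr => x _ do rewrite normCK rmorph_sum big_distrl /=.
under eq_bigr => x _ do under eq_bigr => b _ do rewrite big_distrr /=.
rewrite exchange_big /=; apply: eq_big_seq => b bB.
rewrite exchange_big /= normCK -(sum_mul_delta (fun b' => w b * (w b')^*) uB bB).
apply: eq_big_seq => b' b'B; rewrite -(orth b b') // big_distrr /=.
by apply: eq_bigr => x _; rewrite rmorphM /=; ring.
Qed.

Lemma orthonormal_left_inverse (T T' : eqType) (L : T -> T' -> C) (M : T' -> T -> C)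
    (A : seq T) (B : seq T') (w : T -> C) : uniq A ->
  (forall x x', x \in A -> x' \in A ->
     \sum_(b <- B) L x b * M b x' = (x == x')%:R) ->
  forall x, x \in A -> \sum_(b <- B) L x b * (\sum_(x' <- A) M b x' * w x') = w x.
Proof.
move=> uA orth x xA.
under eq_bigr => b _ do rewrite big_distrr /=.
rewrite exchange_big /= -(sum_mul_delta w uA xA).
apply: eq_big_seq => x' x'A; rewrite -(orth x x') // big_distrr /=.
by apply: eq_bigr => b _; ring.
Qed.

Lemma prod_eqR (T : finType) (T' : eqType) (g g' : T -> T') :
  \prod_k ((g k == g' k)%:R : C) = [forall k, g k == g' k]%:R.
Proof.
have [/forallP eqg | /forallPn[k nek]] := boolP [forall k, g k == g' k].
  by rewrite big1 // => k _; rewrite eqg.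
by rewrite (bigD1 k) //= (negbTE nek) mul0r.
Qed.

Lemma tensor_power_orthonormal (T : finType) (T' : eqType) n
    (P : T -> T' -> T' -> C) (g g' : {ffun 'I_n -> T'}) :
  (forall x x', \sum_y P y x x' = (x == x')%:R) ->
  \sum_(f : {ffun 'I_n -> T}) \prod_k P (f k) (g k) (g' k) = (g == g')%:R.
Proof.
move=> orth; rewrite -(bigA_distr_bigA (fun k y => P y (g k) (g' k))) /=.
under eq_bigr => k _ do rewrite orth.
rewrite prod_eqR; congr ((nat_of_bool _)%:R).
by apply/forallP/eqP => [eqg|-> //]; apply/ffunP => k; apply/eqP.
Qed.

Lemma polarization_eq0 (p : C) : (forall al, al * p + (al * p)^* = 0) -> p = 0.
Proof.
move=> h; have h1 := h 1; have hi := h 'i.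
rewrite mul1r in h1; rewrite rmorphM /= conjCi in hi.
have p_real : p^* = p.
  have : 'i * (p - p^*) = 0 by rewrite -hi; ring.
  by move/eqP; rewrite mulf_eq0 (negbTE (neq0Ci _)) subr_eq0 => /eqP.
have : 2%:R * p = 0 by rewrite -h1 p_real; ring.
by move/eqP; rewrite mulf_eq0 pnatr_eq0 => /eqP.
Qed.

Lemma sum_mul_indicator (T : finType) (F : T -> C) x :
  \sum_z F z * (z == x)%:R = F x.
Proof.
rewrite (bigD1 x) //= eqxx mulr1 big1 ?addr0 // => z /negbTE ->.
by rewrite mulr0.
Qed.

Lemma conjC_sum_mul_nat (T : Type) (s : seq T) (F G : T -> C) (n : nat) :
  \sum_(x <- s) F x * (G x)^* = n%:R -> \sum_(x <- s) (F x)^* * G x = n%:R.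
Proof.
move/(congr1 (fun z : C => z^*)); rewrite rmorph_sum conjC_nat => <-.
by apply: eq_bigr => x _; rewrite rmorphM /= conjCK.
Qed.

Lemma isometry_orthonormal_cols (T T' : finType) (M : T -> T' -> C) :
  (forall b : T' -> C, \sum_y `|\sum_x M y x * b x| ^+ 2 = \sum_x `|b x| ^+ 2) ->
  forall x x', \sum_y M y x * (M y x')^* = (x == x')%:R.
Proof.
move=> iso.
have norm1 x : \sum_y M y x * (M y x)^* = 1.
  have := iso (fun z => (z == x)%:R).
  under eq_bigr => y _ do rewrite sum_mul_indicator normCK.
  move=> ->; rewrite (bigD1 x) //= (eqxx x) normr1 expr1n big1 ?addr0 // => z /negbTE ->.
  by rewrite normr0 expr0n.
move=> x x'; have [<-|nexx'] := eqVneq x x'; first exact: norm1.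
apply: polarization_eq0 => al.
have := iso (fun z => (z == x)%:R + al^* * (z == x')%:R).
under eq_bigr => y _ do
  rewrite (eq_bigr _ (fun z _ => mulrDr _ _ _)) big_split /= sum_mul_indicator
          (eq_bigr _ (fun z _ => mulrCA _ _ _)) -big_distrr /= sum_mul_indicator.
have norm2_b : \sum_z `|(z == x)%:R + al^* * (z == x')%:R| ^+ 2 = 1 + `|al| ^+ 2.
  have nex'x : x' != x by rewrite eq_sym.
  rewrite (bigD1 x) //= (bigD1 x' nex'x) /= big1 => [|z /andP[/negbTE -> /negbTE ->]].
    by rewrite !eqxx (negbTE nexx') (negbTE nex'x) mulr0 mulr1 addr0 add0r normr1
               expr1n addr0 norm_conjC.
  by rewrite mulr0 addr0 normr0 expr0n.
rewrite norm2_b.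
have expand y : `|M y x + al^* * M y x'| ^+ 2 = M y x * (M y x)^*
    + (al * (M y x * (M y x')^*) + (al * (M y x * (M y x')^*))^*)
    + `|al| ^+ 2 * (M y x' * (M y x')^*).
  by rewrite !normCK !rmorphD !rmorphM /= !conjCK; ring.
under eq_bigr => y _ do rewrite expand.
rewrite !big_split /= -big_distrr -rmorph_sum -!big_distrr /= !norm1 mulr1.
move=> h; apply: (addrI (1 + `|al| ^+ 2)); rewrite addr0 -[X in _ = X]h; ring.
Qed.

End FiniteSums.

Lemma mem_window N (i : int) : (i \in window N) = (`|i| <= N)%N.
Proof.
apply/mapP/idP => [[k + ->]|iN]; first by rewrite mem_iota; lia.
by exists (absz (i + N%:Z)%R); rewrite ?mem_iota; lia.
Qed.

Lemma window_uniq N : uniq (window N).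
Proof. by rewrite map_inj_uniq ?iota_uniq // => x y; lia. Qed.

Lemma big_window (R : comPzSemiRingType) N (G : int -> R) :
  \prod_(i <- window N) G i = \prod_(k < N.*2.+1) G (k%:Z - N%:Z).
Proof. by rewrite big_map -(big_mkord xpredT (fun k => G (k%:Z - N%:Z))). Qed.

Lemma big_window_stable (R : comPzSemiRingType) (G : int -> R) N M :
  (forall i, (N < `|i|)%N -> G i = 1) -> (N <= M)%N ->
  \prod_(i <- window M) G i = \prod_(i <- window N) G i.
Proof.
move=> G1 NM; rewrite (bigID (fun i => `|i| <= N)%N) /= [X in _ * X]big1 ?mulr1.
  rewrite -big_filter; apply/perm_big/uniq_perm; rewrite ?filter_uniq ?window_uniq //.
  by move=> i; rewrite mem_filter !mem_window; apply/andP/idP => [[]|iN] //; split=> //; lia.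
by move=> i iN; apply: G1; lia.
Qed.

Section Configurations.
Variables (r : nat) (Sig : 'I_r -> finType) (q : State Sig).
Local Notation St := (State Sig).
Local Notation CF := (Config q).

Lemma cfg_inj : injective (@cfg r Sig q).
Proof. by move=> [c pc] [d pd] /= eqcd; subst d; congr exist; apply: proof_irrelevance. Qed.

Definition cfg_eqb (c d : CF) : bool :=
  if excluded_middle_informative (c = d) then true else false.

Lemma cfg_eqP : Equality.axiom cfg_eqb.
Proof. by move=> c d; rewrite /cfg_eqb; case: excluded_middle_informative; constructor. Qed.

HB.instance Definition _ := hasDecEq.Build CF cfg_eqP.

Definition quiescent_beyond N (f : int -> St) := forall i, (N < `|i|)%N -> f i = q.

Lemma quiescent_beyond_mono N M f :
  (N <= M)%N -> quiescent_beyond N f -> quiescent_beyond M f.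
Proof. by move=> NM fN i Mi; apply: fN; lia. Qed.

Lemma not_quiescent_beyond N f :
  ~ quiescent_beyond N f -> exists2 i, (N < `|i|)%N & f i != q.
Proof.
move=> nqN; apply: NNPP => noi; apply: nqN => i Ni.
by apply: NNPP => fi; apply: noi; exists i => //; apply/eqP.
Qed.

Definition cfg_bound (c : CF) : nat :=
  proj1_sig (constructive_indefinite_description _ (proj2_sig c)).

Lemma cfg_boundP c : quiescent_beyond (cfg_bound c) (cfg c).
Proof. by rewrite /cfg_bound; case: constructive_indefinite_description. Qed.

Lemma quiescent_beyond_bound c N : (cfg_bound c <= N)%N -> quiescent_beyond N (cfg c).
Proof. by move=> cN; exact: quiescent_beyond_mono cN (@cfg_boundP c). Qed.

(* A configuration quiescent beyond N is a function on the window -N..N; cell i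
   is the [(i + N)]-th entry. *)
Definition of_window_fun N (f : {ffun 'I_(N.*2.+1) -> St}) (i : int) : St :=
  if (`|i| <= N)%N then f (inord (absz (i + N%:Z)%R)) else q.

Lemma of_window_funP N (f : {ffun 'I_(N.*2.+1) -> St}) :
  exists n, forall i, (n < `|i|)%N -> of_window_fun f i = q.
Proof. by exists N => i Ni; rewrite /of_window_fun leqNgt Ni. Qed.

Definition of_window N (f : {ffun 'I_(N.*2.+1) -> St}) : CF :=
  exist _ (of_window_fun f) (of_window_funP f).

Lemma of_window_at N (f : {ffun 'I_(N.*2.+1) -> St}) (k : 'I_(N.*2.+1)) :
  cfg (of_window f) (k%:Z - N%:Z) = f k.
Proof.
have := ltn_ord k; rewrite /= /of_window_fun => kN.
by rewrite ifT; [congr (f _); apply: val_inj; rewrite /= inordK|]; lia.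
Qed.

Lemma of_window_quiescent N (f : {ffun 'I_(N.*2.+1) -> St}) :
  quiescent_beyond N (cfg (of_window f)).
Proof. by move=> i Ni; rewrite /= /of_window_fun leqNgt Ni. Qed.

Lemma of_window_inj N : injective (@of_window N).
Proof. by move=> f g eqfg; apply/ffunP => k; rewrite -!of_window_at eqfg. Qed.

Definition window_cfgs N : seq CF :=
  [seq of_window f | f <- enum {ffun 'I_(N.*2.+1) -> St}].

Lemma window_cfgs_uniq N : uniq (window_cfgs N).
Proof. by rewrite map_inj_uniq ?enum_uniq //; exact: of_window_inj. Qed.

Lemma window_cfgsP N d : d \in window_cfgs N <-> quiescent_beyond N (cfg d).
Proof.
split=> [/mapP[f _ ->]|dN]; first exact: of_window_quiescent.
apply/mapP; exists [ffun k : 'I_(N.*2.+1) => cfg d (k%:Z - N%:Z)]; first by rewrite mem_enum.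
apply: cfg_inj; apply: functional_extensionality => i /=; rewrite /of_window_fun.
case: ifP => iN; last by rewrite dN //; lia.
by rewrite ffunE inordK; [congr (cfg d _)|]; lia.
Qed.

Lemma window_cfgs_mono N M : (N <= M)%N -> {subset window_cfgs N <= window_cfgs M}.
Proof. by move=> NM d /window_cfgsP /(quiescent_beyond_mono NM) /window_cfgsP. Qed.

Lemma window_cfgs_bound d : d \in window_cfgs (cfg_bound d).
Proof. exact/window_cfgsP/cfg_boundP. Qed.

Lemma big_window_cfgs (V : nmodType) N (F : CF -> V) :
  \sum_(d <- window_cfgs N) F d = \sum_(f : {ffun 'I_(N.*2.+1) -> St}) F (of_window f).
Proof. by rewrite big_map big_enum. Qed.

End Configurations.

Section PartitionMap.
Variables (r : nat) (Sig : 'I_r -> finType) (q : State Sig) (a : 'I_r -> int).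
Local Notation St := (State Sig).
Local Notation CF := (Config q).

Definition shift_cells_fun (b : 'I_r -> int) (c : CF) (i : int) : St :=
  [ffun j => cfg c (i + b j) j].

Lemma shift_cells_funP b c :
  exists n, forall i, (n < `|i|)%N -> shift_cells_fun b c i = q.
Proof.
exists (cfg_bound c + \max_j `|b j|)%N => i ci; apply/ffunP => j.
have bj : (`|b j| <= \max_j `|b j|)%N by exact: (leq_bigmax (F := fun j => `|b j|%N)).
by rewrite ffunE cfg_boundP //; lia.
Qed.

Definition shift_cells b c : CF := exist _ (shift_cells_fun b c) (shift_cells_funP b c).

(* [pi c] gathers at cell i the j-th component of cell i + a_j of c, so that
   [delta_p (nbh a c i) = cfg (pi c) i]. *)
Definition pi : CF -> CF := shift_cells a.
Definition pi_inv : CF -> CF := shift_cells (fun j => - a j).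

Lemma pi_invK : cancel pi_inv pi.
Proof.
move=> c; apply: cfg_inj; apply: functional_extensionality => i.
by apply/ffunP => j; rewrite /= /shift_cells_fun !ffunE addrK.
Qed.

Lemma piK : cancel pi pi_inv.
Proof.
move=> c; apply: cfg_inj; apply: functional_extensionality => i.
by apply/ffunP => j; rewrite /= /shift_cells_fun !ffunE subrK.
Qed.

Definition pre_window_cfgs N : seq CF := map pi_inv (window_cfgs q N).

Lemma pre_window_cfgs_uniq N : uniq (pre_window_cfgs N).
Proof. by rewrite map_inj_uniq ?window_cfgs_uniq //; exact: can_inj pi_invK. Qed.

Lemma mem_pre_window_cfgs N c : (c \in pre_window_cfgs N) = (pi c \in window_cfgs q N).
Proof. by rewrite -[c in LHS]piK mem_map //; exact: can_inj pi_invK. Qed.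

Lemma pre_window_cfgs_mono N M :
  (N <= M)%N -> {subset pre_window_cfgs N <= pre_window_cfgs M}.
Proof. by move=> NM c; rewrite !mem_pre_window_cfgs; apply: window_cfgs_mono. Qed.

Lemma pre_window_cfgs_bound c : c \in pre_window_cfgs (cfg_bound (pi c)).
Proof. by rewrite mem_pre_window_cfgs window_cfgs_bound. Qed.

Lemma big_pre_window_cfgs (V : nmodType) N (F : CF -> V) :
  \sum_(c <- pre_window_cfgs N) F c =
  \sum_(g : {ffun 'I_(N.*2.+1) -> St}) F (pi_inv (of_window q g)).
Proof. by rewrite big_map big_window_cfgs. Qed.

End PartitionMap.

Section Kernel.
Variables (R : realType) (r : nat) (Sig : 'I_r -> finType).
Variables (a : 'I_r -> int) (q : State Sig) (Q : State Sig -> State Sig -> R[i]).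
Local Notation C := R[i].
Local Notation St := (State Sig).
Local Notation CF := (Config q).
Local Notation pi := (pi a).
Local Notation pi_inv := (pi_inv a).
Local Notation W := (window_cfgs q).
Local Notation PW := (pre_window_cfgs q a).

(* The coefficient U_A(d, c), computed on a window outside which both [d] and [pi c]
   are quiescent. *)
Definition kernel (d c : CF) : C :=
  \prod_(i <- window (maxn (cfg_bound d) (cfg_bound (pi c)))) Q (cfg d i) (cfg (pi c) i).

Hypothesis Qqq : Q q q = 1.

Lemma kernel_window N d c :
  quiescent_beyond q N (cfg d) -> quiescent_beyond q N (cfg (pi c)) ->
  kernel d c = \prod_(i <- window N) Q (cfg d i) (cfg (pi c) i).
Proof.
move=> dN cN; rewrite /kernel; set M := maxn _ _.
have dM : quiescent_beyond q M (cfg d) by apply: quiescent_beyond_bound; rewrite leq_maxl.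
have cM : quiescent_beyond q M (cfg (pi c)).
  by apply: quiescent_beyond_bound; rewrite leq_maxr.
have Q1 K : quiescent_beyond q K (cfg d) -> quiescent_beyond q K (cfg (pi c)) ->
    forall i, (K < `|i|)%N -> Q (cfg d i) (cfg (pi c) i) = 1.
  by move=> dK cK i Ki; rewrite dK // cK.
rewrite -(big_window_stable (Q1 _ dM cM) (leq_maxr N M)).
exact: big_window_stable (Q1 _ dN cN) (leq_maxl N M).
Qed.

Lemma delta_nbh (d c : CF) i : delta Q (nbh a c i) (cfg d i) = Q (cfg d i) (cfg (pi c) i).
Proof. by rewrite /delta; congr (Q _ _); apply/ffunP => j; rewrite !ffunE. Qed.

Lemma Ucoef_kernel d c : Ucoef a Q d c (kernel d c).
Proof.
exists (maxn (cfg_bound d) (cfg_bound (pi c))) => M; rewrite geq_max => /andP[dM cM].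
under eq_bigr do rewrite delta_nbh.
by rewrite (kernel_window (quiescent_beyond_bound dM) (quiescent_beyond_bound cM)).
Qed.

Lemma Ucoef_kernelE d c z : Ucoef a Q d c z -> z = kernel d c.
Proof.
case=> M zM; have [M' kM'] := Ucoef_kernel d c.
by rewrite -(zM (maxn M M')) ?leq_maxl // -(kM' (maxn M M')) ?leq_maxr.
Qed.

Lemma kernel_of_window N (f g : {ffun 'I_(N.*2.+1) -> St}) :
  kernel (of_window q f) (pi_inv (of_window q g)) = \prod_k Q (f k) (g k).
Proof.
have gN : quiescent_beyond q N (cfg (pi (pi_inv (of_window q g)))).
  by rewrite pi_invK; exact: of_window_quiescent.
rewrite (kernel_window (of_window_quiescent q f) gN) big_window pi_invK.
by apply: eq_bigr => k _; rewrite !of_window_at.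
Qed.

Lemma kernel_eq0_at d c i : Q (cfg d i) (cfg (pi c) i) = 0 -> kernel d c = 0.
Proof.
move=> Qi0; pose M := maxn (maxn (cfg_bound d) (cfg_bound (pi c))) `|i|.
have [dM cM] : (cfg_bound d <= M)%N /\ (cfg_bound (pi c) <= M)%N.
  by rewrite !leq_max !leqnn !orbT.
rewrite (kernel_window (quiescent_beyond_bound dM) (quiescent_beyond_bound cM)).
by rewrite (big_rem i) ?mem_window ?leq_maxr //= Qi0 mul0r.
Qed.

Lemma kernel_eq0_outside_l (Qcol : forall y, Q y q = (y == q)%:R) N d c :
  c \in PW N -> d \notin W N -> kernel d c = 0.
Proof.
rewrite mem_pre_window_cfgs => /window_cfgsP cN dN.
have /not_quiescent_beyond[i Ni di] : ~ quiescent_beyond q N (cfg d).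
  by move/window_cfgsP; apply/negP.
by apply: (@kernel_eq0_at _ _ i); rewrite cN // Qcol (negbTE di).
Qed.

Lemma kernel_eq0_outside_r (Qrow : forall x, Q q x = (x == q)%:R) N d c :
  d \in W N -> c \notin PW N -> kernel d c = 0.
Proof.
rewrite mem_pre_window_cfgs => /window_cfgsP dN cN.
have /not_quiescent_beyond[i Ni ci] : ~ quiescent_beyond q N (cfg (pi c)).
  by move/window_cfgsP; apply/negP.
by apply: (@kernel_eq0_at _ _ i); rewrite dN // Qrow (negbTE ci).
Qed.

Lemma Uapp_finite (L : seq CF) (u v : CF -> C) d : uniq L ->
  (forall c, c \notin L -> kernel d c * u c = 0) -> Uapp a Q u v ->
  v d = \sum_(c <- L) kernel d c * u c.
Proof.
move=> uL Lu0 /(_ d)[w [wK wu]]; apply: (HasSum_unique wu).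
apply: (@eq_HasSum _ _ (fun c => kernel d c * u c)) => [c|].
  by rewrite (Ucoef_kernelE (wK c)).
exact: HasSum_finite.
Qed.

Lemma Uapp_intro (L : CF -> seq CF) (u v : CF -> C) : (forall d, uniq (L d)) ->
  (forall d c, c \notin L d -> kernel d c * u c = 0) ->
  (forall d, v d = \sum_(c <- L d) kernel d c * u c) -> Uapp a Q u v.
Proof.
move=> uL Lu0 vE d; exists (kernel d); split; first exact: Ucoef_kernel.
by rewrite vE; exact: HasSum_finite (uL d) (Lu0 d).
Qed.

Section OrthonormalKernel.
Hypothesis Qrows : forall y y', \sum_x Q y x * (Q y' x)^* = (y == y')%:R.
Hypothesis Qcols : forall x x', \sum_y Q y x * (Q y x')^* = (x == x')%:R.

Lemma kernel_cols_orthonormal N c c' : c \in PW N -> c' \in PW N ->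
  \sum_(d <- W N) kernel d c * (kernel d c')^* = (c == c')%:R.
Proof.
move=> /mapP[_ /mapP[g _ ->] ->] /mapP[_ /mapP[g' _ ->] ->].
rewrite big_window_cfgs.
under eq_bigr => f _ do rewrite !kernel_of_window rmorph_prod -big_split /=.
rewrite (tensor_power_orthonormal (P := fun y x x' => Q y x * (Q y x')^*)) //.
by rewrite (inj_eq (can_inj (pi_invK a))) (inj_eq (@of_window_inj _ _ _ N)).
Qed.

Lemma kernel_rows_orthonormal N d d' : d \in W N -> d' \in W N ->
  \sum_(c <- PW N) kernel d c * (kernel d' c)^* = (d == d')%:R.
Proof.
move=> /mapP[f _ ->] /mapP[f' _ ->].
rewrite big_pre_window_cfgs.
under eq_bigr => g _ do rewrite !kernel_of_window rmorph_prod -big_split /=.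
rewrite (tensor_power_orthonormal (P := fun x y y' => Q y x * (Q y' x)^*)) //.
by rewrite (inj_eq (@of_window_inj _ _ _ N)).
Qed.

End OrthonormalKernel.

End Kernel.

Section UnitaryEvolution.
Variables (R : realType) (r : nat) (Sig : 'I_r -> finType).
Variables (a : 'I_r -> int) (q : State Sig) (Q : State Sig -> State Sig -> R[i]).
Local Notation C := R[i].
Local Notation CF := (Config q).
Local Notation kernel := (kernel a Q).
Local Notation W := (window_cfgs q).
Local Notation PW := (pre_window_cfgs q a).

Hypothesis Qrow : forall x, Q q x = (x == q)%:R.
Hypothesis Qcol : forall y, Q y q = (y == q)%:R.
Hypothesis Qrows : forall y y', \sum_x Q y x * (Q y' x)^* = (y == y')%:R.
Hypothesis Qcols : forall x x', \sum_y Q y x * (Q y x')^* = (x == x')%:R.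

Let Qqq : Q q q = 1. Proof. by rewrite Qrow eqxx. Qed.

Lemma Uapp_window (u v : CF -> C) N d : Uapp a Q u v -> d \in W N ->
  v d = \sum_(c <- PW N) kernel d c * u c.
Proof.
move=> Uuv dN; apply: (Uapp_finite Qqq (pre_window_cfgs_uniq q a N) _ Uuv) => c cN.
by rewrite (kernel_eq0_outside_r Qqq Qrow dN cN) mul0r.
Qed.

Lemma unitary_well_formed : well_formed a q Q.
Proof.
move=> u s us; pose v d := \sum_(c <- PW (cfg_bound d)) kernel d c * u c.
have Uuv : Uapp a Q u v.
  apply: (Uapp_intro Qqq (L := fun d => PW (cfg_bound d))) => // [d|d c cN].
    exact: pre_window_cfgs_uniq.
  by rewrite (kernel_eq0_outside_r Qqq Qrow (window_cfgs_bound d) cN) mul0r.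
exists v; split => //.
apply: (HasSum_exhaustions (A := W) (B := PW)) us => // [d|c|||||||N].
- exact: exprn_ge0.
- exact: exprn_ge0.
- exact: window_cfgs_uniq.
- exact: pre_window_cfgs_uniq.
- exact: window_cfgs_mono.
- exact: pre_window_cfgs_mono.
- by move=> d; exists (cfg_bound d); exact: window_cfgs_bound.
- by move=> c; exists (cfg_bound (pi a c)); exact: pre_window_cfgs_bound.
under eq_big_seq => d dN do rewrite (Uapp_window Uuv dN).
apply: orthonormal_sum_norm2; rewrite ?window_cfgs_uniq ?pre_window_cfgs_uniq //.
by move=> c c'; exact: kernel_cols_orthonormal.
Qed.

Lemma unitary_injective (u1 u2 v : CF -> C) :
  Uapp a Q u1 v -> Uapp a Q u2 v -> u1 = u2.
Proof.
move=> Uu1v Uu2v; apply: functional_extensionality => c.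
pose N := cfg_bound (pi a c).
suff adjointE u : Uapp a Q u v -> u c = \sum_(d <- W N) (kernel d c)^* * v d.
  by rewrite (adjointE _ Uu1v) (adjointE _ Uu2v).
move=> Uuv; under eq_big_seq => d dN do rewrite (Uapp_window Uuv dN).
symmetry; apply: (orthonormal_left_inverse (L := fun c d => (kernel d c)^*)
  (M := fun d c => kernel d c) (B := W N) _ (pre_window_cfgs_uniq q a N) _
  (pre_window_cfgs_bound a c)).
move=> c1 c2 c1N c2N.
exact: conjC_sum_mul_nat (kernel_cols_orthonormal Qqq Qcols c1N c2N).
Qed.

Lemma unitary_surjective (v : CF -> C) : in_l2 v -> exists u, in_l2 u /\ Uapp a Q u v.
Proof.
case=> s vs.
have adjoint_sum N c : c \in PW N ->
    HasSum (fun d => (kernel d c)^* * v d) (\sum_(d <- W N) (kernel d c)^* * v d).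
  move=> cN; apply: HasSum_finite => [|d dN]; first exact: window_cfgs_uniq.
  by rewrite (kernel_eq0_outside_l Qqq Qcol cN dN) conjC0 mul0r.
pose u c := \sum_(d <- W (cfg_bound (pi a c))) (kernel d c)^* * v d.
have uE N c : c \in PW N -> u c = \sum_(d <- W N) (kernel d c)^* * v d.
  by move=> cN; apply: HasSum_unique (adjoint_sum _ _ (pre_window_cfgs_bound a c))
                                     (adjoint_sum _ _ cN).
exists u; split.
  exists s; apply: (HasSum_exhaustions (A := PW) (B := W)) vs => // [c|d|||||||N].
  - exact: exprn_ge0.
  - exact: exprn_ge0.
  - exact: pre_window_cfgs_uniq.
  - exact: window_cfgs_uniq.
  - exact: pre_window_cfgs_mono.
  - exact: window_cfgs_mono.
  - by move=> c; exists (cfg_bound (pi a c)); exact: pre_window_cfgs_bound.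
  - by move=> d; exists (cfg_bound d); exact: window_cfgs_bound.
  under eq_big_seq => c cN do rewrite (uE _ _ cN).
  apply: (orthonormal_sum_norm2 (K := fun c d => (kernel d c)^*));
    rewrite ?window_cfgs_uniq ?pre_window_cfgs_uniq // => d d' dN d'N.
  under eq_bigr do rewrite conjCK.
  exact: conjC_sum_mul_nat (kernel_rows_orthonormal a Qqq Qrows dN d'N).
apply: (Uapp_intro Qqq (L := fun d => PW (cfg_bound d))) => [d|d c cN|d].
- exact: pre_window_cfgs_uniq.
- by rewrite (kernel_eq0_outside_r Qqq Qrow (window_cfgs_bound d) cN) mul0r.
under eq_big_seq => c cN do rewrite (uE _ _ cN).
symmetry; apply: (orthonormal_left_inverse (L := kernel) (M := fun c d => (kernel d c)^*)
  (B := PW _) _ (window_cfgs_uniq q _) _ (window_cfgs_bound d)).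
by move=> d1 d2; exact: kernel_rows_orthonormal.
Qed.

End UnitaryEvolution.

Section WellFormedIsometry.
Variables (R : realType) (r : nat) (Sig : 'I_r -> finType).
Variables (a : 'I_r -> int) (q : State Sig) (Q : State Sig -> State Sig -> R[i]).
Local Notation C := R[i].
Local Notation St := (State Sig).
Local Notation CF := (Config q).
Local Notation kernel := (kernel a Q).

Hypothesis Qcol : forall y, Q y q = (y == q)%:R.

Let Qqq : Q q q = 1. Proof. by rewrite Qcol eqxx. Qed.

Definition single (x : St) : CF := of_window q [ffun _ : 'I_(0.*2.+1) => x].

Lemma single_inj : injective single.
Proof. by move=> x y /of_window_inj /ffunP /(_ ord0); rewrite !ffunE. Qed.

Lemma single_at0 x : cfg (single x) 0 = x.
Proof. by have := @of_window_at _ _ q 0 [ffun _ => x] ord0; rewrite ffunE subrr. Qed.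

Lemma kernel_single y x : kernel (single y) (pi_inv a (single x)) = Q y x.
Proof. by rewrite kernel_of_window // big_ord1 !ffunE. Qed.

Lemma big_window_cfgs0 (F : CF -> C) :
  \sum_(d <- window_cfgs q 0) F d = \sum_y F (single y).
Proof.
rewrite big_window_cfgs (reindex (fun y : St => [ffun _ : 'I_(0.*2.+1) => y])) //.
exists (fun f : {ffun 'I_(0.*2.+1) -> St} => f ord0) => [y _|f _]; first by rewrite ffunE.
by apply/ffunP => k; rewrite ffunE (ord1 k).
Qed.

Hypothesis wf : well_formed a q Q.

(* U_A restricted to the vectors supported on [pi_inv (single x)] acts as Q. *)
Lemma well_formed_isometry (b : St -> C) :
  \sum_y `|\sum_x Q y x * b x| ^+ 2 = \sum_x `|b x| ^+ 2.
Proof.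
pose L := [seq pi_inv a (single x) | x <- enum St].
have uL : uniq L.
  by rewrite map_inj_uniq ?enum_uniq // => x y /(can_inj (pi_invK a)) /single_inj.
have sumL (F : CF -> C) : \sum_(c <- L) F c = \sum_x F (pi_inv a (single x)).
  by rewrite big_map big_enum.
pose u c := if c \in L then b (cfg (pi a c) 0) else 0.
have u_single x : u (pi_inv a (single x)) = b x.
  rewrite /u ifT ?pi_invK ?single_at0 //.
  by apply: (map_f (fun y => pi_inv a (single y))); rewrite mem_enum.
have u0 c : c \notin L -> u c = 0 by rewrite /u => /negbTE ->.
have u_l2 : l2norm2 u (\sum_(c <- L) `|u c| ^+ 2).
  by apply: HasSum_finite uL _ => c cL; rewrite u0 // normr0 expr0n.
have [v [Uuv v_l2]] := wf u_l2.
have vE d : v d = \sum_(c <- L) kernel d c * u c.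
  by apply: (Uapp_finite Qqq uL _ Uuv) => c cL; rewrite u0 // mulr0.
have v0 d : d \notin window_cfgs q 0 -> v d = 0.
  move=> dW; rewrite vE big1_seq // => c /andP[_ /mapP[x _ ->]].
  rewrite (kernel_eq0_outside_l Qqq Qcol _ dW) ?mul0r //.
  by rewrite mem_pre_window_cfgs pi_invK; apply/window_cfgsP/of_window_quiescent.
have v_l2' : l2norm2 v (\sum_(d <- window_cfgs q 0) `|v d| ^+ 2).
  by apply: HasSum_finite (window_cfgs_uniq q 0) _ => d dW; rewrite v0 // normr0 expr0n.
have := HasSum_unique v_l2 v_l2'.
rewrite sumL big_window_cfgs0; under eq_bigr do rewrite u_single.
move=> ->; apply: eq_bigr => y _; rewrite vE sumL.
by congr (`|_| ^+ 2); apply: eq_bigr => x _; rewrite kernel_single u_single.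
Qed.

End WellFormedIsometry.

Section TransitionMatrix.
Variables (R : realType) (r : nat) (Sig : 'I_r -> finType).
Variable Q : State Sig -> State Sig -> R[i].
Local Notation St := (State Sig).

Lemma sum_enum_val (F : St -> R[i]) : \sum_(j < #|St|) F (enum_val j) = \sum_x F x.
Proof. by rewrite (reindex (@enum_val _ (mem St))) //; exact: onW_bij (enum_val_bij St). Qed.

Lemma unitarymx_rows : Qmx Q \is unitarymx ->
  forall y y', \sum_x Q y x * (Q y' x)^* = (y == y')%:R.
Proof.
move/unitarymxP/matrixP => QQ y y'; have := QQ (enum_rank y) (enum_rank y').
rewrite !mxE (inj_eq enum_rank_inj) => <-; rewrite -sum_enum_val.
by apply: eq_bigr => j _; rewrite !mxE !enum_rankK.
Qed.

Lemma unitarymx_cols : Qmx Q \is unitarymx ->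
  forall x x', \sum_y Q y x * (Q y x')^* = (x == x')%:R.
Proof.
rewrite -trmx_unitary => /unitarymxP/matrixP QQ x x'.
have := QQ (enum_rank x) (enum_rank x').
rewrite !mxE (inj_eq enum_rank_inj) => <-; rewrite -sum_enum_val.
by apply: eq_bigr => j _; rewrite !mxE !enum_rankK.
Qed.

Lemma cols_unitarymx : (forall x x', \sum_y Q y x * (Q y x')^* = (x == x')%:R) ->
  Qmx Q \is unitarymx.
Proof.
move=> Qcols; rewrite -trmx_unitary; apply/unitarymxP/matrixP => i k.
rewrite !mxE -(inj_eq enum_val_inj) -Qcols -sum_enum_val.
by apply: eq_bigr => j _; rewrite !mxE.
Qed.

End TransitionMatrix.

Lemma PLQCA_quiescent_col (R : realType) (r : nat) (Sig : 'I_r -> finType)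
    (a : 'I_r -> int) (q : State Sig) (Q : State Sig -> State Sig -> R[i]) :
  is_PLQCA a q Q -> forall y, Q y q = (y == q)%:R.
Proof.
case=> _ [_ deltaq] y; rewrite -deltaq /delta; congr (Q y _).
by apply/ffunP => j; rewrite ffunE.
Qed.

Lemma quiescent_row (R : realType) (T : finType) (Q : T -> T -> R[i]) q :
  (forall y, Q y q = (y == q)%:R) ->
  (forall y y', \sum_x Q y x * (Q y' x)^* = (y == y')%:R) ->
  forall x, Q q x = (x == q)%:R.
Proof.
move=> Qcol Qrows x; have := Qrows q q.
rewrite eqxx (bigD1 q) //= Qcol eqxx conjC1 mulr1 -[X in _ = X]addr0 => /addrI rest0.
have [->|nexq] := eqVneq x q; first by rewrite Qcol eqxx.
have /eqP := psumr_eq0P (fun i _ => mul_conjC_ge0 (Q q i)) rest0 nexq.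
by rewrite mul_conjC_eq0 => /eqP ->.
Qed.

Theorem theorem6 (R : realType) (r : nat) (Sig : 'I_r -> finType)
    (a : 'I_r -> int) (q : State Sig) (Q : State Sig -> State Sig -> R[i]) :
  is_PLQCA a q Q ->
  (Qmx Q \is unitarymx <-> well_formed a q Q) /\
  (well_formed a q Q <-> U_unitary a q Q).
Proof.
move=> plqca; have Qcol := PLQCA_quiescent_col plqca.
have unitary_evolution : Qmx Q \is unitarymx -> U_unitary a q Q.
  move=> Qunitary; have Qrows := unitarymx_rows Qunitary.
  have Qcols := unitarymx_cols Qunitary.
  have Qrow := quiescent_row Qcol Qrows.
  split; first exact (unitary_well_formed a Qrow Qcols).
  split; first by move=> u1 u2 v _ _; exact: (unitary_injective (a := a) Qrow Qcols).
  exact (unitary_surjective a Qrow Qcol Qrows).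
have unitary_Q : well_formed a q Q -> Qmx Q \is unitarymx.
  by move=> wf; apply/cols_unitarymx/isometry_orthonormal_cols/(well_formed_isometry Qcol wf).
split; split.
- by move/unitary_evolution => [].
- exact: unitary_Q.
- by move/unitary_Q/unitary_evolution.
- by case.
Qed.
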